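(* Let $G$ be a threshold graph on $n$ vertices with binary string $b=0^{s_1}1^{t_1}\cdots0^{s_k}1^{t_k}$ (all $s_i,t_i\geq1$). Let $s=\min_i s_i$, $t=\min_i t_i$, $\sigma=\max_i s_i$, $\tau=\max_i t_i$. Let $G'$ be the threshold graph with binary string $b'=(0^s1^t)^k$ (the block $0^s1^t$ repeated $k$ times) and $G''$ the threshold graph with binary string $b''=(0^\sigma1^\tau)^k$, with $n'=k(s+t)$ and $n''=k(\sigma+\tau)$ vertices respectively. Then \[ \lambda_i(G'')\leq\lambda_i(G)\leq\lambda_i(G'),\quad i=1,\ldots,k, \] and \[ \lambda_{n'-j}(G')\leq\lambda_{n-j}(G)\leq\lambda_{n''-j}(G''),\quad j=0,\ldots,k-1. \]
   Context: Eigenvalues of a graph $H$ on $m$ vertices are those of its $(0,1)$-adjacency matrix, ordered $\lambda_1(H)\leq\cdots\leq\lambda_m(H)$. Threshold graphs from binary strings: given $b=b_1\cdots b_n\in\{0,1\}^n$ with $b_1=0$, start with a single vertex and for $j=2,\ldots,n$ add a new vertex adjacent to all previous vertices if $b_j=1$ and isolated if $b_j=0$; the result is $G(b)$, and $b$ is its binary string. $0^s$ (resp. $1^t$) denotes $s$ consecutive zeros (resp. $t$ consecutive ones). *)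

From HB Require Import structures.
From mathcomp Require Import all_boot all_order all_algebra all_field.
Set Implicit Arguments. Unset Strict Implicit. Unset Printing Implicit Defensive.
Import Order.TTheory GRing.Theory Num.Theory.
Local Open Scope ring_scope.

(* Threshold graph G(b) on vertices 0..size b - 1 (0-based): vertex j is
   adjacent to all earlier vertices iff b_j = 1, so for i <> j the pair
   {i,j} is an edge iff b_(max i j) = 1. Adjacency matrix over algC. *)
Definition thr_adj (b : seq bool) : 'M[algC]_(size b) :=
  \matrix_(i, j) (if i == j then 0 else (nth false b (maxn i j))%:R).

(* Eigenvalues = roots of the characteristic polynomial, with multiplicity,
   sorted increasingly (they are all real, the matrix being real symmetric). *)
Definition thr_spec (b : seq bool) : seq algC :=
  sort (fun x y : algC => x <= y)
    (projT1 (closed_field_poly_normal (char_poly (thr_adj b)))).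

(* lambda_i(G(b)), 1-based index i = 1..size b. *)
Definition thr_lambda (b : seq bool) (i : nat) : algC :=
  nth 0 (thr_spec b) i.-1.

Definition block_string (k : nat) (s t : nat -> nat) : seq bool :=
  flatten [seq nseq (s i) false ++ nseq (t i) true | i <- iota 0 k].

From HB Require Import structures.
From mathcomp Require Import all_boot all_order all_algebra all_field.
From mathcomp Require Import zify.
Set Implicit Arguments. Unset Strict Implicit. Unset Printing Implicit Defensive.
Import Order.TTheory GRing.Theory Num.Theory.

(* If [b1] is a subsequence of [b2], then G(b1) is an induced subgraph of
   G(b2): two vertices i < j are adjacent iff b_j = 1, and an increasing
   embedding of positions preserves which of two vertices is the later one.
   So the adjacency matrix of G(b1) is a principal submatrix of that of G(b2),
   and Cauchy interlacing gives lambda_i(G(b2)) <= lambda_i(G(b1)) and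
   lambda_(n1-j)(G(b1)) <= lambda_(n2-j)(G(b2)).  Blockwise, b' is a
   subsequence of b, which is a subsequence of b''. *)

Section SortedCount.
Variables (T : Type) (leT : rel T) (x0 : T).
Hypotheses (leT_tr : transitive leT) (leT_refl : reflexive leT).

Lemma sorted_count_ge (t : seq T) r : sorted leT t ->
  size t - r <= count (leT (nth x0 t r)) t.
Proof.
move=> t_sorted; rewrite -[X in count _ X](cat_take_drop r) count_cat.
have: all (leT (nth x0 t r)) (drop r t).
  apply/(all_nthP x0) => i; rewrite size_drop nth_drop => lt_i.
  by apply: sorted_leq_nth => //; rewrite ?inE; lia.
by rewrite all_count size_drop => /eqP ->; apply: leq_addl.
Qed.

Lemma sorted_count_le (t : seq T) r : sorted leT t -> r < size t ->
  r.+1 <= count (fun x => leT x (nth x0 t r)) t.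
Proof.
move=> t_sorted lt_r; rewrite -[X in count _ X](cat_take_drop r.+1) count_cat.
have size_take_r : size (take r.+1 t) = r.+1 by rewrite size_takel.
have: all (fun x => leT x (nth x0 t r)) (take r.+1 t).
  apply/(all_nthP x0) => i; rewrite size_take_r => lt_i; rewrite nth_take //.
  by apply: sorted_leq_nth => //; rewrite ?inE; lia.
by rewrite all_count size_take_r => /eqP ->; apply: leq_addr.
Qed.

End SortedCount.

Lemma subseq_embedding (T : eqType) (x0 : T) (s1 s2 : seq T) : subseq s1 s2 ->
  exists h : 'I_(size s1) -> 'I_(size s2),
    (forall i j : 'I_(size s1), i < j -> h i < h j) /\
    (forall i, nth x0 s2 (h i) = nth x0 s1 i).
Proof.
case/subseqP => m size_m ->; set idx := mask m (iota 0 (size s2)).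
have size_idx : size idx = size (mask m s2) by rewrite !size_mask ?size_iota.
have idx_sorted : sorted ltn idx.
  exact: (subseq_sorted ltn_trans (mask_subseq _ _) (iota_ltn_sorted 0 _)).
have idx_lt i : i < size (mask m s2) -> nth 0 idx i < size s2.
  rewrite -size_idx => lt_i.
  by have /mem_mask := mem_nth 0 lt_i; rewrite mem_iota.
have nth_idx k : k < size idx -> nth x0 s2 (nth 0 idx k) = nth x0 (mask m s2) k.
  by move=> lt_k; rewrite -[in RHS](mkseq_nth x0 s2) /mkseq -map_mask (nth_map 0).
exists (fun i : 'I_(size (mask m s2)) => Ordinal (idx_lt i (ltn_ord i))).
split => [i j lt_ij|i] /=.
  by apply: (sorted_ltn_nth ltn_trans 0 idx_sorted); rewrite ?inE ?size_idx.
by rewrite nth_idx ?size_idx.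
Qed.

Lemma block_stringS k (s t : nat -> nat) :
  block_string k.+1 s t = block_string k s t ++ (nseq (s k) false ++ nseq (t k) true).
Proof. by rewrite /block_string -addn1 iotaD map_cat flatten_cat /= cats0. Qed.

Lemma size_block_string_const k a c :
  size (block_string k (fun _ => a) (fun _ => c)) = k * (a + c).
Proof.
elim: k => [|k IHk] //.
by rewrite block_stringS !size_cat IHk !size_nseq mulSnr.
Qed.

Lemma subseq_block_string k (s1 t1 s2 t2 : nat -> nat) :
  (forall i, i < k -> s1 i <= s2 i /\ t1 i <= t2 i) ->
  subseq (block_string k s1 t1) (block_string k s2 t2).
Proof.
elim: k => [|k IHk] le_st //; rewrite !block_stringS.
have [le_s le_t] := le_st k (ltnSn k).
apply: cat_subseq; first by apply: IHk => i lt_ik; apply: le_st; apply: ltnW.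
by apply: cat_subseq; [rewrite -(subnKC le_s) | rewrite -(subnKC le_t)];
  rewrite nseqD prefix_subseq.
Qed.

Local Open Scope ring_scope.
Local Open Scope sesquilinear_scope.

Lemma common_nonzero_row (F : fieldType) p q n (W : 'M[F]_(p, n)) (U : 'M_(q, n)) :
  (n < \rank W + \rank U)%N ->
  exists2 u : 'rV_n, u != 0 & (u <= W)%MS && (u <= U)%MS.
Proof.
move=> rank_gt; have: (W :&: U)%MS != 0.
  rewrite -mxrank_eq0 -lt0n.
  by have := mxrank_sum_cap W U; have := rank_leq_col (W + U)%MS; lia.
by case/rowV0Pn => u u_sub u_neq0; exists u; rewrite // -sub_capmx.
Qed.

Lemma char_poly_similar (R : comUnitRingType) n (P M : 'M[R]_n) :
  P \in unitmx -> char_poly (invmx P *m M *m P) = char_poly M.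
Proof.
move=> P_unit; rewrite /char_poly /char_poly_mx.
have -> : 'X%:M - map_mx polyC (invmx P *m M *m P) =
    map_mx polyC (invmx P) *m ('X%:M - map_mx polyC M) *m map_mx polyC P.
  rewrite mulmxBr mulmxBl !map_mxM; congr (_ - _).
  by rewrite mul_mx_scalar -scalemxAl -map_mxM mulVmx // map_mx1 scalemx1.
by rewrite !det_mulmx mulrAC -det_mulmx -map_mxM mulVmx // map_mx1 det1 mul1r.
Qed.

Section Spectrum.
Variable C : numClosedFieldType.

Definition char_roots n (A : 'M[C]_n) : seq C :=
  projT1 (closed_field_poly_normal (char_poly A)).

Definition spectrum n (A : 'M[C]_n) : seq C :=
  sort (fun x y : C => x <= y) (char_roots A).

Lemma size_spectrum n (A : 'M[C]_n) : size (spectrum A) = n.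
Proof.
rewrite size_sort /char_roots; case: closed_field_poly_normal => r /= char_prod.
rewrite (monicP (char_poly_monic A)) scale1r in char_prod.
by apply/succn_inj; rewrite -(size_prod_XsubC r id) -char_prod size_char_poly.
Qed.

Lemma char_roots_diag n (A P : 'M[C]_n) (d : 'rV_n) :
  P \is unitarymx -> A = P^t* *m diag_mx d *m P ->
  perm_eq (char_roots A) [seq d 0 i | i <- enum 'I_n].
Proof.
move=> P_unitary def_A; rewrite /char_roots.
case: closed_field_poly_normal => r /= char_prod.
rewrite (monicP (char_poly_monic A)) scale1r in char_prod.
apply: prod_XsubC_eq; rewrite big_map -char_prod def_A -invmx_unitary //.
rewrite char_poly_similar ?unitarymx_unit // char_poly_trig ?diag_mx_is_trig //.
by rewrite big_enum /=; apply: eq_bigr => i _; rewrite mxE eqxx mulr1n.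
Qed.

Section Hermitian.
Variables (n : nat) (A : 'M[C]_n).
Hypothesis A_herm : A \is hermsymmx.

Local Notation P := (spectralmx A).
Local Notation d := (spectral_diag A).

Lemma hermitian_spectral_decomp : A = P^t* *m diag_mx d *m P.
Proof.
rewrite -invmx_unitary ?spectral_unitarymx //.
exact/orthomx_spectralP/hermitian_normalmx.
Qed.

Lemma card_spectral_diag (p : pred C) :
  #|[set i | p (d 0 i)]| = count p (spectrum A).
Proof.
have /permEl/permP -> := perm_sort (fun x y : C => x <= y) (char_roots A).
have /permP -> := char_roots_diag (spectral_unitarymx A) hermitian_spectral_decomp.
by rewrite count_map cardsE -sum1_card -sum1_count big_enum_cond.
Qed.

Lemma sorted_spectrum : sorted (fun x y : C => x <= y) (spectrum A).
Proof.
apply: (@sort_sorted_in _ (fun x => x \is Num.real)); first exact: real_leVge.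
apply/allP => x.
rewrite (perm_mem (char_roots_diag (spectral_unitarymx A) hermitian_spectral_decomp)).
case/mapP => i _ ->; have /mxOverP := hermitian_spectral_diag_real A_herm; apply.
Qed.

End Hermitian.

Definition quad_form n (A : 'M[C]_n) (u : 'rV_n) : C := (u *m A *m u^t*) 0 0.

Lemma quad_formM p n (A : 'M[C]_n) (X : 'M_(p, n)) z :
  quad_form A (z *m X) = quad_form (X *m A *m X^t*) z.
Proof. by rewrite /quad_form trmx_mul map_mxM !mulmxA. Qed.

Lemma quad_form_decomp n (A P : 'M[C]_n) d z :
  P \is unitarymx -> A = P^t* *m diag_mx d *m P ->
  quad_form A (z *m P) = quad_form (diag_mx d) z.
Proof.
move=> P_unitary ->.
by rewrite quad_formM !mulmxA mulmxtVK // (unitarymxP P_unitary) mul1mx.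
Qed.

Lemma dotmx_unitary p n (X : 'M[C]_(p, n)) z :
  X \is unitarymx -> dotmx (z *m X) (z *m X) = dotmx z z.
Proof. by move=> X_unitary; rewrite !dotmxE trmx_mul map_mxM mulmxA mulmxtVK. Qed.

Lemma quad_form_diag n (d z : 'rV[C]_n) :
  quad_form (diag_mx d) z = \sum_j `|z 0 j| ^+ 2 * d 0 j.
Proof.
rewrite /quad_form mul_mx_diag !mxE; apply: eq_bigr => j _.
by rewrite !mxE normCK mulrAC.
Qed.

Lemma dotmx_sum n (z : 'rV[C]_n) : dotmx z z = \sum_j `|z 0 j| ^+ 2.
Proof. by rewrite dotmxE mxE; apply: eq_bigr => j _; rewrite !mxE normCK. Qed.

Lemma quad_form_diag_le n (d z : 'rV[C]_n) c :
  (forall j, z 0 j != 0 -> d 0 j <= c) -> quad_form (diag_mx d) z <= c * dotmx z z.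
Proof.
move=> le_dc; rewrite quad_form_diag dotmx_sum mulr_sumr; apply: ler_sum => j _.
have [->|z_neq0] := eqVneq (z 0 j) 0; first by rewrite normr0 expr0n !mul0r mulr0.
by rewrite mulrC ler_wpM2r ?exprn_ge0 ?le_dc.
Qed.

Lemma quad_form_diag_ge n (d z : 'rV[C]_n) c :
  (forall j, z 0 j != 0 -> c <= d 0 j) -> c * dotmx z z <= quad_form (diag_mx d) z.
Proof.
move=> le_cd; rewrite quad_form_diag dotmx_sum mulr_sumr; apply: ler_sum => j _.
have [->|z_neq0] := eqVneq (z 0 j) 0; first by rewrite normr0 expr0n !mul0r mulr0.
by rewrite mulrC ler_wpM2l ?exprn_ge0 ?le_cd.
Qed.

Lemma principal_submx m n (h : 'I_m -> 'I_n) (A : 'M[C]_n) :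
  mxsub h h A = rowsub h 1%:M *m A *m (rowsub h 1%:M)^t*.
Proof.
rewrite trmx_mxsub trmx1 map_mxsub map_mx1 mulmx_colsub mulmx1.
by rewrite mul_rowsub_mx mul1mx; apply/matrixP => i j; rewrite !mxE.
Qed.

Lemma rowsub1_unitary m n (h : 'I_m -> 'I_n) :
  injective h -> rowsub h (1%:M : 'M[C]_n) \is unitarymx.
Proof.
move=> h_inj; apply/unitarymxP; rewrite -[X in X *m _]mulmx1 -principal_submx.
by apply/matrixP => i j; rewrite !mxE (inj_eq h_inj).
Qed.

Definition supp_mx n (S : {set 'I_n}) : 'M[C]_(#|S|, n) := rowsub enum_val 1%:M.

Lemma supp_mx_unitary n (S : {set 'I_n}) : supp_mx S \is unitarymx.
Proof. exact/rowsub1_unitary/enum_val_inj. Qed.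

Lemma supp_mx_support n (S : {set 'I_n}) (z : 'rV_n) j :
  (z <= supp_mx S)%MS -> z 0 j != 0 -> j \in S.
Proof.
case/submxP => x ->; apply: contraR => j_notin_S.
rewrite !mxE big1 // => r _; rewrite !mxE.
by case: eqP => [def_j|]; [rewrite -def_j enum_valP in j_notin_S | rewrite mulr0].
Qed.

(* Courant-Fischer in one step: the span of the eigenvectors of [J A J^*]
   indexed by [T], carried to C^n by [J], meets the span of the eigenvectors
   of [A] indexed by [S]; at a common nonzero [u],
   [c2 |u|^2 <= u A u^* <= c1 |u|^2]. *)
Lemma compression_eigen_cross n m (A : 'M[C]_n) (J : 'M_(m, n))
    (P : 'M_n) (d : 'rV_n) (Q : 'M_m) (e : 'rV_m)
    (T : {set 'I_m}) (S : {set 'I_n}) (c1 c2 : C) :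
  J \is unitarymx ->
  P \is unitarymx -> A = P^t* *m diag_mx d *m P ->
  Q \is unitarymx -> J *m A *m J^t* = Q^t* *m diag_mx e *m Q ->
  (n < #|T| + #|S|)%N ->
  {in T, forall i, e 0 i <= c1} -> {in S, forall i, c2 <= d 0 i} ->
  c2 <= c1.
Proof.
move=> J_unitary P_unitary def_A Q_unitary def_B card_TS le_e le_d.
have QJ_unitary := mul_unitarymx Q_unitary J_unitary.
have [u u_neq0 /andP[/submxP[x def_u] /submxP[y def_u']]] :
    exists2 u : 'rV_n, u != 0 &
      (u <= supp_mx T *m (Q *m J))%MS && (u <= supp_mx S *m P)%MS.
  apply: common_nonzero_row.
  by rewrite !mxrank_unitary ?mul_unitarymx ?supp_mx_unitary //.
rewrite !mulmxA in def_u def_u'.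
set z := x *m supp_mx T in def_u; set w := y *m supp_mx S in def_u'.
have z_supp j : z 0 j != 0 -> j \in T by apply/supp_mx_support/submxMl.
have w_supp j : w 0 j != 0 -> j \in S by apply/supp_mx_support/submxMl.
have norm_z : dotmx u u = dotmx z z by rewrite def_u dotmx_unitary // dotmx_unitary.
have norm_w : dotmx u u = dotmx w w by rewrite def_u' dotmx_unitary.
have quad_z : quad_form A u = quad_form (diag_mx e) z.
  by rewrite def_u quad_formM (quad_form_decomp _ Q_unitary def_B).
have quad_w : quad_form A u = quad_form (diag_mx d) w.
  by rewrite def_u' (quad_form_decomp _ P_unitary def_A).
rewrite -(ler_pM2r (_ : 0 < dotmx u u)) ?dnorm_gt0 //.
apply: (@le_trans _ _ (quad_form A u)).
  by rewrite quad_w norm_w; apply: quad_form_diag_ge => j /w_supp /le_d.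
by rewrite quad_z norm_z; apply: quad_form_diag_le => j /z_supp /le_e.
Qed.

Section Interlacing.
Variables (n m : nat) (A : 'M[C]_n) (J : 'M[C]_(m, n)).
Hypotheses (A_herm : A \is hermsymmx) (J_unitary : J \is unitarymx).

Local Notation B := (J *m A *m J^t*).

Lemma compression_hermitian : B \is hermsymmx.
Proof.
apply/is_hermitianmxP; rewrite expr0 scale1r !trmx_mul !map_mxM trmxCK mulmxA.
by have := is_hermitianmxP _ _ _ A_herm; rewrite expr0 scale1r => <-.
Qed.

Lemma compression_size : (m <= n)%N.
Proof. by rewrite -(mxrank_unitary J_unitary) rank_leq_col. Qed.

Local Notation lambda := (spectrum A).
Local Notation mu := (spectrum B).

Lemma interlacing_low r : (r < m)%N -> lambda`_r <= mu`_r.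
Proof.
move=> lt_rm; have lt_rn := leq_trans lt_rm compression_size.
apply: (compression_eigen_cross (T := [set i | spectral_diag B 0 i <= mu`_r])
  (S := [set i | lambda`_r <= spectral_diag A 0 i]) J_unitary
  (spectral_unitarymx A) (hermitian_spectral_decomp A_herm)
  (spectral_unitarymx B) (hermitian_spectral_decomp compression_hermitian)).
- rewrite (card_spectral_diag compression_hermitian (fun x => x <= mu`_r)).
  rewrite (card_spectral_diag A_herm (<=%R lambda`_r)).
  have := sorted_count_le 0 le_trans lexx (sorted_spectrum compression_hermitian).
  have := sorted_count_ge 0 le_trans lexx r (sorted_spectrum A_herm).
  rewrite !size_spectrum; move=> /= ge_count /(_ r lt_rm) le_count.
  by apply: leq_trans (leq_add le_count ge_count); lia.
- by move=> i; rewrite inE.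
- by move=> i; rewrite inE.
Qed.

Lemma interlacing_high j : (j < m)%N -> mu`_(m - j.+1) <= lambda`_(n - j.+1).
Proof.
move=> lt_jm; have lt_jn := leq_trans lt_jm compression_size.
set mu_j := mu`_(m - j.+1); set lambda_j := lambda`_(n - j.+1).
rewrite -lerN2.
apply: (compression_eigen_cross (A := - A) (d := - spectral_diag A)
  (e := - spectral_diag B) (T := [set i | mu_j <= spectral_diag B 0 i])
  (S := [set i | spectral_diag A 0 i <= lambda_j]) J_unitary
  (spectral_unitarymx A) _ (spectral_unitarymx B)).
- by rewrite {1}(hermitian_spectral_decomp A_herm) raddfN /= mulmxN mulNmx.
- rewrite mulmxN mulNmx {1}(hermitian_spectral_decomp compression_hermitian).
  by rewrite raddfN /= mulmxN mulNmx.
- rewrite (card_spectral_diag compression_hermitian (<=%R mu_j)).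
  rewrite (card_spectral_diag A_herm (fun x => x <= lambda_j)).
  have := sorted_count_ge 0 le_trans lexx (m - j.+1)
    (sorted_spectrum compression_hermitian).
  have := sorted_count_le 0 le_trans lexx (sorted_spectrum A_herm).
  rewrite !size_spectrum => /(_ (n - j.+1)%N) le_count ge_count.
  by apply: leq_trans (leq_add ge_count (le_count _)); lia.
- by move=> i; rewrite inE !mxE lerN2.
- by move=> i; rewrite inE !mxE lerN2.
Qed.

End Interlacing.
End Spectrum.

Lemma thr_adj_hermitian (b : seq bool) : thr_adj b \is hermsymmx.
Proof.
apply/is_hermitianmxP; rewrite expr0 scale1r; apply/matrixP => i j.
by rewrite !mxE maxnC eq_sym; case: (j == i); rewrite ?conjC0 ?conjC_nat.
Qed.

Lemma thr_adj_submx (b1 b2 : seq bool) (h : 'I_(size b1) -> 'I_(size b2)) :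
  (forall i j : 'I_(size b1), (i < j)%N -> (h i < h j)%N) ->
  (forall i, nth false b2 (h i) = nth false b1 i) ->
  thr_adj b1 = mxsub h h (thr_adj b2).
Proof.
move=> h_mono h_nth; apply/matrixP => i j; rewrite !mxE.
case: (ltngtP i j) => [lt_ij|lt_ji|/val_inj ->]; last by rewrite !eqxx.
- have lt_h := h_mono _ _ lt_ij.
  by rewrite !(maxn_idPr (ltnW _)) // h_nth -!val_eqE (ltn_eqF lt_ij) (ltn_eqF lt_h).
- have lt_h := h_mono _ _ lt_ji.
  by rewrite !(maxn_idPl (ltnW _)) // h_nth -!val_eqE (gtn_eqF lt_ji) (gtn_eqF lt_h).
Qed.

Lemma thr_adj_compression (b1 b2 : seq bool) : subseq b1 b2 ->
  exists2 J : 'M[algC]_(size b1, size b2),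
    J \is unitarymx & thr_adj b1 = J *m thr_adj b2 *m J^t*.
Proof.
case/(subseq_embedding false) => h [h_mono h_nth].
have h_inj : injective h.
  move=> i j eq_h; apply/val_inj.
  by case: (ltngtP i j) => // /h_mono; rewrite eq_h ltnn.
exists (rowsub h 1%:M); first exact: rowsub1_unitary.
by rewrite -principal_submx; apply: thr_adj_submx.
Qed.

Lemma thr_spec_spectrum (b : seq bool) : thr_spec b = spectrum (thr_adj b).
Proof. by []. Qed.

Lemma thr_lambda_subseq_low (b1 b2 : seq bool) i : subseq b1 b2 ->
  (0 < i <= size b1)%N -> thr_lambda b2 i <= thr_lambda b1 i.
Proof.
case/thr_adj_compression => J J_unitary def_b1 /andP[i_gt0 le_i].
rewrite /thr_lambda !thr_spec_spectrum def_b1.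
by apply: interlacing_low; rewrite ?thr_adj_hermitian // prednK.
Qed.

Lemma thr_lambda_subseq_high (b1 b2 : seq bool) j : subseq b1 b2 ->
  (j < size b1)%N -> thr_lambda b1 (size b1 - j) <= thr_lambda b2 (size b2 - j).
Proof.
case/thr_adj_compression => J J_unitary def_b1 lt_j.
rewrite /thr_lambda !thr_spec_spectrum -!subnS def_b1.
exact: interlacing_high (thr_adj_hermitian _) J_unitary _ lt_j.
Qed.

Theorem theorem5p1 (k : nat) (s t : nat -> nat) (smin tmin smax tmax : nat) :
  (0 < k)%N ->
  (forall i, (i < k)%N -> (1 <= s i)%N /\ (1 <= t i)%N) ->
  (exists2 i, (i < k)%N & s i = smin) -> (forall i, (i < k)%N -> (smin <= s i)%N) ->
  (exists2 i, (i < k)%N & t i = tmin) -> (forall i, (i < k)%N -> (tmin <= t i)%N) ->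
  (exists2 i, (i < k)%N & s i = smax) -> (forall i, (i < k)%N -> (s i <= smax)%N) ->
  (exists2 i, (i < k)%N & t i = tmax) -> (forall i, (i < k)%N -> (t i <= tmax)%N) ->
  let b := block_string k s t in
  let b' := block_string k (fun _ => smin) (fun _ => tmin) in
  let b'' := block_string k (fun _ => smax) (fun _ => tmax) in
  let n := size b in
  let n' := (k * (smin + tmin))%N in
  let n'' := (k * (smax + tmax))%N in
  (forall i, (1 <= i <= k)%N ->
     thr_lambda b'' i <= thr_lambda b i /\ thr_lambda b i <= thr_lambda b' i) /\
  (forall j, (j < k)%N ->
     thr_lambda b' (n' - j) <= thr_lambda b (n - j) /\
     thr_lambda b (n - j) <= thr_lambda b'' (n'' - j)).
Proof.
move=> _ st_ge1 [i0 lt_i0 s_i0] le_smin _ le_tmin _ le_smax _ le_tmax.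
move=> b b' b'' n n' n''.
have sub_b' : subseq b' b by apply: subseq_block_string => i lt_i; split; auto.
have sub_b : subseq b b'' by apply: subseq_block_string => i lt_i; split; auto.
have size_b' : size b' = n' by apply: size_block_string_const.
have size_b'' : size b'' = n'' by apply: size_block_string_const.
have le_kn' : (k <= n')%N by have [] := st_ge1 i0 lt_i0; rewrite /n'; nia.
have le_n'n : (n' <= n)%N by rewrite -size_b'; apply: size_subseq.
split=> [i /andP[i_gt0 le_ik] | j lt_jk]; split.
- by apply: thr_lambda_subseq_low sub_b _; rewrite i_gt0 /=; lia.
- by apply: thr_lambda_subseq_low sub_b' _; rewrite i_gt0 size_b' /=; lia.
- by rewrite -size_b'; apply: thr_lambda_subseq_high sub_b' _; lia.
- by rewrite -size_b''; apply: thr_lambda_subseq_high sub_b _; lia.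
Qed.
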